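(* Let $H,K$ be finitely generated abelian groups, $n,m\ge3$, and let $\sigma\colon G\to S_n$, $\sigma'\colon G'\to S_m$ be surjective homomorphisms. Let $W=H^n\rtimes_\sigma G$ and $W'=K^m\rtimes_{\sigma'}G'$, and assume that every abelian normal subgroup of $W$ is contained in $H^n$ and every abelian normal subgroup of $W'$ is contained in $K^m$. If $\Phi\colon W\to W'$ is a group isomorphism, then: (1) $\Phi(H^n)=K^m$; (2) $H^n\cong K^m$; (3) $\mathrm{rk}(H)\,n=\mathrm{rk}(K)\,m$; (4) $T(H)^n\cong T(K)^m$; (5) $G\cong G'$.
   Context: $H^n\rtimes_\sigma G$ denotes the semidirect product in which $G$ acts on $H^n$ by permuting coordinates through $\sigma$: $g\cdot(h_1,\dots,h_n)=(h_{\sigma(g)(1)},\dots,h_{\sigma(g)(n)})$ (with the composition convention making this a left action); $H^n$ is identified with $\{(\mathbf h,1)\}$. For a finitely generated abelian group $A\cong\mathbb Z^r\oplus T$ with $T$ finite, $\mathrm{rk}(A)=r$ and $T(A)=T$ is its torsion subgroup. All groups are non-trivial. *)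

From HB Require Import structures.
From mathcomp Require Import all_boot all_order all_algebra all_fingroup.
Set Implicit Arguments. Unset Strict Implicit. Unset Printing Implicit Defensive.
Import GRing.Theory.

Local Open Scope group_scope.

Definition is_subgroup (W : groupType) (S : W -> Prop) : Prop :=
  [/\ S 1, (forall x y, S x -> S y -> S (x * y)) & (forall x, S x -> S x^-1)].

Definition is_normal (W : groupType) (S : W -> Prop) : Prop :=
  forall x g : W, S x -> S (x ^ g).

Definition is_abelian (W : groupType) (S : W -> Prop) : Prop :=
  forall x y : W, S x -> S y -> x * y = y * x.

Definition group_iso (G G' : groupType) : Prop :=
  exists f : G -> G', bijective f /\ {morph f : x y / x * y}.

Local Close Scope group_scope.
Local Open Scope ring_scope.

Definition zmod_iso (A B : zmodType) : Prop :=
  exists f : A -> B, bijective f /\ {morph f : x y / x + y}.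

Definition zmod_iso_on (A B : zmodType) (P : A -> Prop) (Q : B -> Prop) : Prop :=
  exists f : A -> B,
    [/\ (forall x, P x -> Q (f x)),
        (forall x y, P x -> P y -> f x = f y -> x = y),
        (forall y, Q y -> exists2 x, P x & f x = y) &
        (forall x y, P x -> P y -> f (x + y) = f x + f y)].

Definition fin_generated (A : zmodType) : Prop :=
  exists s : seq A, forall x : A,
    exists c : 'I_(size s) -> int, x = \sum_(i < size s) s`_i *~ c i.

Definition is_torsion (A : zmodType) (x : A) : Prop :=
  exists k : nat, (0 < k)%N /\ x *+ k = 0.

Definition has_rank (A : zmodType) (r : nat) : Prop :=
  exists T : finZmodType, zmod_iso A ('rV[int]_r * T)%type.

(* T(A)^n as the subgroup of A^n of tuples with torsion coordinates *)
Definition torsion_pow (A : zmodType) (n : nat) : {ffun 'I_n -> A} -> Prop :=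
  fun h => forall i, is_torsion (h i).

(* carrier of H^n ><|_sigma G; it formally depends on sigma, which
   determines the group law given below *)
Definition sdprod_sigma (H : zmodType) (G : groupType) (n : nat)
  (sigma : {multiplicative G -> {perm 'I_n}}) : Type :=
  ({ffun 'I_n -> H} * G)%type.
Section Sdprod.
Variables (H : zmodType) (G : groupType) (n : nat).
Variable sigma : {multiplicative G -> {perm 'I_n}}.

(* g . h = (h_{sigma g 1}, ..., h_{sigma g n}); with MathComp's convention
   (s * t) x = t (s x) this is a left action. *)
Definition pact (g : G) (h : {ffun 'I_n -> H}) : {ffun 'I_n -> H} :=
  [ffun i => h (sigma g i)].

Local Notation sdprod_sigma := (@sdprod_sigma H G n sigma).
HB.instance Definition _ := Choice.on sdprod_sigma.

Definition sd_mul (x y : sdprod_sigma) : sdprod_sigma :=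
  (x.1 + pact x.2 y.1, (x.2 * y.2)%g).
Definition sd_one : sdprod_sigma := (0, 1%g).
Definition sd_inv (x : sdprod_sigma) : sdprod_sigma :=
  (- pact (x.2^-1)%g x.1, (x.2^-1)%g).

Lemma sigma1 : sigma 1%g = 1%g.
Proof.
apply: (@mulIg _ (sigma 1%g)).
by rewrite -gmulfM !mul1g.
Qed.

Lemma pact1 h : pact 1%g h = h.
Proof. by apply/ffunP => i; rewrite ffunE sigma1 perm1. Qed.

Lemma pactM g g' h : pact g (pact g' h) = pact (g * g')%g h.
Proof. by apply/ffunP => i; rewrite !ffunE gmulfM permM. Qed.

Lemma pactD g h h' : pact g (h + h') = pact g h + pact g h'.
Proof. by apply/ffunP => i; rewrite !ffunE. Qed.

Lemma pact0 g : pact g 0 = 0.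
Proof. by apply/ffunP => i; rewrite !ffunE. Qed.

Lemma pactN g h : pact g (- h) = - pact g h.
Proof. by apply/ffunP => i; rewrite !ffunE. Qed.

Fact sd_mulA : associative sd_mul.
Proof.
case=> h1 g1 [h2 g2] [h3 g3]; rewrite /sd_mul /=.
by rewrite pactD pactM addrA mulgA.
Qed.

Fact sd_mul1 : left_id sd_one sd_mul.
Proof. by case=> h g; rewrite /sd_mul /= add0r pact1 mul1g. Qed.

Fact sd_mulg1 : right_id sd_one sd_mul.
Proof. by case=> h g; rewrite /sd_mul /= pact0 addr0 mulg1. Qed.

Fact sd_mulV : left_inverse sd_one sd_inv sd_mul.
Proof.
case=> h g; rewrite /sd_mul /sd_inv /sd_one /=.
by rewrite addNr mulVg.
Qed.

Fact sd_mulgV : right_inverse sd_one sd_inv sd_mul.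
Proof.
case=> h g; rewrite /sd_mul /sd_inv /sd_one /=.
by rewrite pactN pactM !mulgV pact1 subrr.
Qed.

HB.instance Definition _ := isGroup.Build sdprod_sigma
  sd_mulA sd_mul1 sd_mulg1 sd_mulV sd_mulgV.

Definition base_sub : sdprod_sigma -> Prop := fun x => x.2 = 1%g.

End Sdprod.

Arguments sdprod_sigma H {G n} sigma.

From HB Require Import structures.
From mathcomp Require Import all_boot all_order all_algebra all_fingroup.
From mathcomp Require Import cyclic.
Set Implicit Arguments. Unset Strict Implicit. Unset Printing Implicit Defensive.
Import GRing.Theory Num.Theory.

(* The base H^n is an abelian normal subgroup of W, and every abelian normal
   subgroup of W' lies in K^m; so Phi maps H^n into K^m and, symmetrically, its
   inverse maps K^m into H^n.  Hence Phi restricts to an isomorphism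
   H^n ~ K^m and induces one between the quotients W/H^n ~ G and W'/K^m ~ G'.
   Additive isomorphisms match torsion elements.  For the ranks, H^n has rank
   n rk(H), and the rank is an invariant: an isomorphism Z^a + T ~ Z^b + T'
   with T, T' finite induces, modulo torsion, an additive map Z^a -> Z^b with
   a left inverse, so a <= b by comparing ranks of integer matrices over Q. *)

Local Open Scope ring_scope.

Section AdditiveMorphism.
Variables (A B : zmodType) (f : A -> B) (fD : {morph f : x y / x + y}).

Fact morph_raddf0 : f 0 = 0.
Proof. by apply: (@addrI _ (f 0)); rewrite -fD !addr0. Qed.

HB.instance Definition _ := GRing.isNmodMorphism.Build A B f (morph_raddf0, fD).

Lemma morph_torsion x : is_torsion x -> is_torsion (f x).
Proof. by case=> k [k_gt0 xk0]; exists k; rewrite -raddfMn xk0 raddf0. Qed.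

Lemma can2_morph_add f' : cancel f f' -> cancel f' f -> {morph f' : x y / x + y}.
Proof. by move=> fK f'K; case: (can2_nmod_morphism fK f'K). Qed.

End AdditiveMorphism.

Lemma zmod_iso_sym (A B : zmodType) : zmod_iso A B -> zmod_iso B A.
Proof.
case=> f [[f' fK f'K] fD]; exists f'; split; first by exists f.
exact: can2_morph_add fK f'K.
Qed.

Lemma zmod_iso_trans (A B C : zmodType) :
  zmod_iso A B -> zmod_iso B C -> zmod_iso A C.
Proof.
case=> f [[f' fK f'K] fD] [g [[g' gK g'K] gD]].
exists (g \o f); split; last by move=> x y /=; rewrite fD gD.
by exists (f' \o g') => x /=; rewrite ?fK ?gK ?g'K ?f'K.
Qed.

Lemma zmod_iso_ffun (I : finType) (A B : zmodType) :
  zmod_iso A B -> zmod_iso {ffun I -> A} {ffun I -> B}.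
Proof.
case=> f [[f' fK f'K] fD].
exists (fun h : {ffun I -> A} => [ffun i => f (h i)]); split.
  exists (fun k : {ffun I -> B} => [ffun i => f' (k i)]) => h;
  by apply/ffunP => i; rewrite !ffunE ?fK ?f'K.
by move=> h k; apply/ffunP => i; rewrite !ffunE fD.
Qed.

Lemma torsion_powP (A : zmodType) n (h : {ffun 'I_n -> A}) :
  torsion_pow h <-> is_torsion h.
Proof.
split=> [h_tors | [k [k_gt0 hk0]] i]; last first.
  by exists k; split=> //; rewrite -ffunMnE hk0 ffunE.
have [k hk] := fin_all_exists h_tors.
exists (\prod_i k i)%N; split; first by rewrite prodn_gt0 // => i; case: (hk i).
apply/ffunP => i; rewrite ffunMnE ffunE (bigD1 i) //= mulrnA.
by case: (hk i) => _ ->; rewrite mul0rn.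
Qed.

Lemma zmod_iso_torsion_pow (A B : zmodType) n m :
  zmod_iso {ffun 'I_n -> A} {ffun 'I_m -> B} ->
  zmod_iso_on (@torsion_pow A n) (@torsion_pow B m).
Proof.
case=> f [[f' fK f'K] fD]; have f'D := can2_morph_add fD fK f'K.
exists f; split=> [h /torsion_powP h_tors | h k _ _ | k /torsion_powP k_tors | h k _ _].
- by apply/torsion_powP; apply: morph_torsion.
- by move/(can_inj fK).
- by exists (f' k); rewrite ?f'K //; apply/torsion_powP; apply: morph_torsion.
- exact: fD.
Qed.

Lemma finZmod_mulrn_card (T : finZmodType) (t : T) : t *+ #|T| = 0.
Proof. by have := expg_cardG (in_setT t); rewrite cardsT. Qed.

Lemma rV_int_torsion_eq0 r (v : 'rV[int]_r) : is_torsion v -> v = 0.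
Proof.
case=> k [k_gt0 /rowP vk0]; apply/rowP => j; have /eqP := vk0 j.
by rewrite mulmxnE !mxE mulrn_eq0 eqn0Ngt k_gt0 => /eqP.
Qed.

Section IntRowAdditive.
Variables (a b : nat) (g : 'rV[int]_a -> 'rV[int]_b) (gD : {morph g : x y / x + y}).

HB.instance Definition _ := GRing.isNmodMorphism.Build _ _ g (morph_raddf0 gD, gD).

Lemma morph_rV_int_mulmx v : g v = v *m \matrix_i g (delta_mx 0 i).
Proof.
rewrite mulmx_sum_row {1}(row_sum_delta v) raddf_sum.
by apply: eq_bigr => j _; rewrite rowK -[v 0 j]intz !scaler_int raddfMz.
Qed.

End IntRowAdditive.

Lemma rV_int_retract_leq a b
    (g : 'rV[int]_a -> 'rV[int]_b) (g' : 'rV[int]_b -> 'rV[int]_a) :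
  {morph g : x y / x + y} -> {morph g' : x y / x + y} -> cancel g g' -> (a <= b)%N.
Proof.
move=> gD g'D gK; set M := \matrix_i g (delta_mx 0 i).
have MM' : M *m \matrix_i g' (delta_mx 0 i) = 1%:M.
  by apply/row_matrixP => i; rewrite row_mul rowK -morph_rV_int_mulmx // gK row1.
have /(congr1 mxrank) := congr1 (map_mx (intr : int -> rat)) MM'.
rewrite map_mxM map_mx1 mxrank1 => <-.
exact: leq_trans (mxrankM_maxl _ _) (rank_leq_col _).
Qed.

Lemma pairD (U V : zmodType) (u u' : U) (v v' : V) :
  (u, v) + (u', v') = (u + u', v + v').
Proof. by []. Qed.

Lemma pair_torsion (U : zmodType) (T : finZmodType) (t : T) : is_torsion (0 : U, t).
Proof.
exists #|T|; split; first by apply/card_gt0P; exists t.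
by rewrite pairMnE /= mul0rn finZmod_mulrn_card.
Qed.

Lemma rank_leq_of_zmod_iso a b (T T' : finZmodType) :
  zmod_iso ('rV[int]_a * T)%type ('rV[int]_b * T')%type -> (a <= b)%N.
Proof.
case=> f [[f' fK f'K] fD]; have f'D := can2_morph_add fD fK f'K.
have pairD0 (U V : zmodType) (u u' : U) : (u + u', 0 : V) = (u, 0) + (u', 0).
  by rewrite pairD addr0.
apply: (@rV_int_retract_leq _ _ (fun v => (f (v, 0)).1) (fun w => (f' (w, 0)).1)).
- by move=> v w; rewrite pairD0 fD.
- by move=> v w; rewrite pairD0 f'D.
move=> v; set y := f (v, 0).
have /(congr1 f') : y = (y.1, 0) + (0, y.2) by rewrite pairD addr0 add0r; case: y.
rewrite f'D fK => /(congr1 fst) /= ->.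
have /(morph_torsion (f := fst)) : is_torsion (f' (0, y.2)).
  exact: morph_torsion (pair_torsion _ _).
by move=> /(_ (fun _ _ => erefl)) /rV_int_torsion_eq0 ->; rewrite addr0.
Qed.

Lemma has_rank_uniq (A : zmodType) a b : has_rank A a -> has_rank A b -> a = b.
Proof.
move=> [T isoA] [T' isoA']; apply/eqP; rewrite eqn_leq.
by rewrite (rank_leq_of_zmod_iso (zmod_iso_trans (zmod_iso_sym isoA) isoA'))
           (rank_leq_of_zmod_iso (zmod_iso_trans (zmod_iso_sym isoA') isoA)).
Qed.

Lemma zmod_iso_has_rank (A B : zmodType) r :
  zmod_iso A B -> has_rank A r -> has_rank B r.
Proof.
by move=> isoAB [T isoA]; exists T; exact: zmod_iso_trans (zmod_iso_sym isoAB) isoA.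
Qed.

Lemma zmod_iso_ffun_rV_pair n r (T : finZmodType) :
  zmod_iso {ffun 'I_n -> 'rV[int]_r * T} ('rV[int]_(n * r) * 'rV[T]_n)%type.
Proof.
exists (fun h : {ffun 'I_n -> 'rV[int]_r * T} =>
          (mxvec (\matrix_i (h i).1), \row_i (h i).2)); split.
  exists (fun x : ('rV[int]_(n * r) * 'rV[T]_n)%type =>
           [ffun i => (row i (vec_mx x.1), x.2 0 i)]) => [h | [v t]].
    by apply/ffunP => i; rewrite ffunE mxvecK rowK mxE; case: (h i).
  congr (_, _); last by apply/rowP => j; rewrite !mxE ffunE.
  rewrite /= -[RHS]vec_mxK; congr mxvec; apply/matrixP => i j.
  by rewrite !mxE ffunE /= !mxE.
move=> h k; rewrite pairD -linearD; congr (mxvec _, _); apply/matrixP => i j.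
  by rewrite !mxE ffunE /= mxE.
by rewrite !mxE ffunE.
Qed.

Lemma has_rank_ffun (A : zmodType) n r :
  has_rank A r -> has_rank {ffun 'I_n -> A} (n * r).
Proof.
case=> T isoA; exists 'rV[T]_n.
exact: zmod_iso_trans (zmod_iso_ffun _ isoA) (zmod_iso_ffun_rV_pair _ _ _).
Qed.

Local Close Scope ring_scope.
Local Open Scope group_scope.

Section GroupMorphism.
Variables (W W' : groupType) (f : W -> W') (fM : {morph f : x y / x * y}).

Fact morph_gmulf1 : f 1 = 1.
Proof. by apply: (@mulgI _ (f 1)); rewrite -fM !mulg1. Qed.

HB.instance Definition _ := isUMagmaMorphism.Build W W' f (morph_gmulf1, fM).

Lemma can2_morph_mul f' : cancel f f' -> cancel f' f -> {morph f' : x y / x * y}.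
Proof. exact: can2_gmulfM. Qed.

Lemma preim_subgroup (S : W' -> Prop) : is_subgroup S -> is_subgroup (S \o f).
Proof.
by case=> S1 SM SV; split=> [|x y Sx Sy|x Sx] /=; rewrite ?gmulf1 ?gmulfM ?gmulfV; auto.
Qed.

Lemma preim_normal (S : W' -> Prop) : is_normal S -> is_normal (S \o f).
Proof. by move=> nS x g /= Sx; rewrite gmulfJ; apply: nS. Qed.

Lemma preim_abelian (S : W' -> Prop) : injective f -> is_abelian S -> is_abelian (S \o f).
Proof. by move=> f_inj aS x y Sx Sy; apply: f_inj; rewrite !gmulfM aS. Qed.

End GroupMorphism.

Lemma iso_abelian_normal_sub (W W' : groupType) (f : W -> W') (f' : W' -> W)
    (S : W -> Prop) (S' : W' -> Prop) :
  {morph f : x y / x * y} -> cancel f f' -> cancel f' f ->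
  is_subgroup S -> is_normal S -> is_abelian S ->
  (forall T : W' -> Prop, is_subgroup T -> is_normal T -> is_abelian T ->
     forall y, T y -> S' y) ->
  forall x, S x -> S' (f x).
Proof.
move=> fM fK f'K subS nS aS maxS' x Sx.
have f'M := can2_morph_mul fM fK f'K.
apply: (maxS' (S \o f')); last by rewrite /= fK.
- exact: preim_subgroup.
- exact: preim_normal.
- exact: preim_abelian (can_inj f'K) aS.
Qed.

Section BaseSubgroup.
Variables (H : zmodType) (G : groupType) (n : nat).
Variable sigma : {multiplicative G -> {perm 'I_n}}.
Local Notation W := (sdprod_sigma H sigma).
Local Notation base := (@base_sub H G n sigma).

Lemma sdprodM (x y : W) : x * y = ((x.1 + pact sigma x.2 y.1)%R, x.2 * y.2).
Proof. by []. Qed.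

Lemma sdprodV (x : W) : x^-1 = ((- pact sigma x.2^-1 x.1)%R, x.2^-1).
Proof. by []. Qed.

Lemma base_subgroup : is_subgroup base.
Proof.
split=> //= [x y | x]; rewrite /base_sub ?sdprodM ?sdprodV /=.
  by move=> -> ->; rewrite mulg1.
by move=> ->; rewrite invg1.
Qed.

Lemma base_normal : is_normal base.
Proof.
by move=> x g; rewrite /base_sub conjgE !sdprodM sdprodV /= => ->; rewrite mul1g mulVg.
Qed.

Lemma base_abelian : is_abelian base.
Proof.
by move=> [h g] [k g']; rewrite /base_sub => /= -> ->; rewrite !sdprodM /= !pact1 addrC.
Qed.

Lemma sdprod_base_top (x : W) : x = ((x.1, 1) : W) * (0%R, x.2).
Proof. by case: x => h g; rewrite sdprodM /= pact0 addr0 mul1g. Qed.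

End BaseSubgroup.

Arguments base_subgroup {H G n sigma}.
Arguments base_normal {H G n sigma}.
Arguments base_abelian {H G n sigma}.

Section InducedMaps.
Variables (H K : zmodType) (G G' : groupType) (n m : nat).
Variables (sigma : {multiplicative G -> {perm 'I_n}})
          (sigma' : {multiplicative G' -> {perm 'I_m}}).
Variable Phi : sdprod_sigma H sigma -> sdprod_sigma K sigma'.

Definition base_map (h : {ffun 'I_n -> H}) : {ffun 'I_m -> K} := (Phi (h, 1)).1.

Definition top_map (g : G) : G' := (Phi (0%R, g)).2.

End InducedMaps.

Section BasePreservingMorphism.
Variables (H K : zmodType) (G G' : groupType) (n m : nat).
Variables (sigma : {multiplicative G -> {perm 'I_n}})
          (sigma' : {multiplicative G' -> {perm 'I_m}}).
Local Notation W := (sdprod_sigma H sigma).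
Local Notation W' := (sdprod_sigma K sigma').

Variable Phi : W -> W'.
Hypotheses (PhiM : {morph Phi : x y / x * y})
           (Phi_base : forall x, base_sub x -> base_sub (Phi x)).

Lemma Phi_base_map h : Phi (h, 1) = (base_map Phi h, 1).
Proof.
move: (@Phi_base (h, 1) erefl); rewrite /base_map /base_sub.
by case: (Phi _) => k g /= ->.
Qed.

Lemma base_mapD : {morph base_map Phi : h k / (h + k)%R}.
Proof.
move=> h k; rewrite /base_map.
have -> : ((h + k)%R, 1) = ((h, 1) : W) * (k, 1) by rewrite sdprodM /= pact1 mulg1.
by rewrite PhiM !Phi_base_map /= pact1.
Qed.

Lemma snd_Phi x : (Phi x).2 = top_map Phi x.2.
Proof. by rewrite [x in LHS]sdprod_base_top PhiM Phi_base_map /= mul1g. Qed.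

Lemma top_mapM : {morph top_map Phi : g g' / g * g'}.
Proof.
by move=> g g'; rewrite -[g * g']/((((0%R, g) : W) * (0%R, g')).2) -snd_Phi PhiM.
Qed.

Lemma base_mapK Phi' : cancel Phi Phi' -> cancel (base_map Phi) (base_map Phi').
Proof. by move=> PhiK h; rewrite {1}/base_map -Phi_base_map PhiK. Qed.

Lemma top_mapKV Phi' : cancel Phi' Phi -> cancel (top_map Phi') (top_map Phi).
Proof. by move=> Phi'K g'; rewrite -snd_Phi Phi'K. Qed.

End BasePreservingMorphism.

Theorem theorem3p19 (H K : zmodType) (G G' : groupType) (n m : nat)
  (sigma : {multiplicative G -> {perm 'I_n}})
  (sigma' : {multiplicative G' -> {perm 'I_m}})
  (fgH : fin_generated H) (fgK : fin_generated K)
  (n_ge3 : (3 <= n)%N) (m_ge3 : (3 <= m)%N)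
  (sigma_surj : forall p : {perm 'I_n}, exists g : G, sigma g = p)
  (sigma'_surj : forall p : {perm 'I_m}, exists g : G', sigma' g = p)
  (hW : forall S : sdprod_sigma H sigma -> Prop,
      is_subgroup S -> is_normal S -> is_abelian S ->
      forall x, S x -> base_sub x)
  (hW' : forall S : sdprod_sigma K sigma' -> Prop,
      is_subgroup S -> is_normal S -> is_abelian S ->
      forall x, S x -> base_sub x)
  (Phi : sdprod_sigma H sigma -> sdprod_sigma K sigma')
  (Phi_bij : bijective Phi) (Phi_morph : {morph Phi : x y / x * y}) :
  [/\ (forall y, (exists2 x, base_sub x & Phi x = y) <-> base_sub y),
      zmod_iso {ffun 'I_n -> H} {ffun 'I_m -> K},
      (forall r s : nat, has_rank H r -> has_rank K s -> (r * n = s * m)%N),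
      zmod_iso_on (@torsion_pow H n) (@torsion_pow K m) &
      group_iso G G'].
Proof.
case: Phi_bij => Phi' PhiK Phi'K.
have Phi'M := can2_morph_mul Phi_morph PhiK Phi'K.
have Phi_base := iso_abelian_normal_sub Phi_morph PhiK Phi'K
  base_subgroup base_normal base_abelian hW'.
have Phi'_base := iso_abelian_normal_sub Phi'M Phi'K PhiK
  base_subgroup base_normal base_abelian hW.
have isoHK : zmod_iso {ffun 'I_n -> H} {ffun 'I_m -> K}.
  exists (base_map Phi); split; last exact: base_mapD.
  by exists (base_map Phi'); apply: base_mapK.
split=> //.
- move=> y; split=> [[x /Phi_base Phix <-] // | y_base].
  by exists (Phi' y); [apply: Phi'_base | apply: Phi'K].
- move=> r s rkH rkK; rewrite mulnC [(s * m)%N]mulnC.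
  apply: has_rank_uniq (has_rank_ffun m rkK).
  exact: zmod_iso_has_rank isoHK (has_rank_ffun n rkH).
- exact: zmod_iso_torsion_pow.
exists (top_map Phi); split; last exact: top_mapM.
by exists (top_map Phi'); apply: top_mapKV.
Qed.
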